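(* Let $\mathfrak g=\mathfrak k+_\rho V$ be the semidirect sum of a finite-dimensional real Lie algebra $\mathfrak k$ and a commutative ideal $V$ via a representation $\rho:\mathfrak k\to\operatorname{End}(V)$. Let $f_1,\dots,f_l$ be polynomials on $\mathfrak g^*$ each satisfying $f_i(M,v)=f_i(M+L,v)$ for all $(M,v)\in\mathfrak g^*$ and $L\in\mathrm{St}_{\rho^*}(v)^\perp$, and write $f_i(M,v)=f_{i,v}(\pi_v(M))$. Suppose that for generic $v\in V^*$ the functions $f_{1,v},\dots,f_{l,v}$ pairwise commute with respect to the Lie–Poisson bracket on $\mathrm{St}_{\rho^*}(v)^*$ and form a complete commutative set in $S(\mathrm{St}_{\rho^*}(v))$. Then $\{f_1,\dots,f_l\}\cup V$ (elements of $V$ viewed as linear functions on $\mathfrak g^*$) is a complete commutative set in $S(\mathfrak g)$.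
   Context: Elements of $\mathfrak g^*=\mathfrak k^*\oplus V^*$ are pairs $(M,v)$. $\rho^*:\mathfrak k\to\operatorname{End}(V^* )$ is the dual representation, $\mathrm{St}_{\rho^*}(v)=\{X\in\mathfrak k\mid\rho^*(X)v=0\}$, $\mathrm{St}_{\rho^*}(v)^\perp\subset\mathfrak k^*$ its annihilator, $\pi_v:\mathfrak k^*\to\mathrm{St}_{\rho^*}(v)^*$ restriction. For a Lie algebra $\mathfrak l$, $S(\mathfrak l)$ is the polynomial algebra on $\mathfrak l^*$ with Lie–Poisson bracket $\{f,g\}(x)=\langle x,[df(x),dg(x)]\rangle$, and $\Phi_x(\xi,\eta)=\langle x,[\xi,\eta]\rangle$. A set of polynomials in $S(\mathfrak l)$ is a complete commutative set if its elements pairwise Poisson-commute and, at generic $x\in\mathfrak l^*$, their differentials span a maximal $\Phi_x$-isotropic subspace of $\mathfrak l$ (equivalently, they generate a subalgebra of transcendence degree $\frac12(\dim\mathfrak l+\operatorname{ind}\mathfrak l)$, where $\operatorname{ind}\mathfrak l$ is the generic corank of $\Phi_x$). *)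

From HB Require Import structures.
From mathcomp Require Import all_boot all_order all_algebra.
From mathcomp Require Import mpoly.
From mathcomp Require Import reals.

Set Implicit Arguments.
Unset Strict Implicit.
Unset Printing Implicit Defensive.

Import Order.TTheory GRing.Theory Num.Theory.
Local Open Scope ring_scope.

(* Coordinates: a finite-dimensional real Lie algebra k is R^n ('rV_n) with a
   bracket br; V = R^m ('rV_m); duals are identified with row vectors via the
   standard pairing [dot]. *)

Section Defs.
Variable R : realType.

Definition dot (p : nat) (a b : 'rV[R]_p) : R := \sum_(i < p) a 0 i * b 0 i.

Definition is_lie_algebra (n : nat) (br : 'rV[R]_n -> 'rV[R]_n -> 'rV[R]_n) : Prop :=
  [/\ (forall (a : R) x y z, br (a *: x + y) z = a *: br x z + br y z),
      (forall (a : R) x y z, br z (a *: x + y) = a *: br z x + br z y),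
      (forall x, br x x = 0) &
      (forall x y z, br x (br y z) + br y (br z x) + br z (br x y) = 0)].

(* representation rho : k -> End(V), written as the action act X u = rho(X) u *)
Definition is_representation (n m : nat) (br : 'rV[R]_n -> 'rV[R]_n -> 'rV[R]_n)
  (act : 'rV[R]_n -> 'rV[R]_m -> 'rV[R]_m) : Prop :=
  [/\ (forall (a : R) X Y u, act (a *: X + Y) u = a *: act X u + act Y u),
      (forall (a : R) X u w, act X (a *: u + w) = a *: act X u + act X w) &
      (forall X Y u, act (br X Y) u = act X (act Y u) - act Y (act X u))].

(* dual representation rho^* on V^* : <rho^*(X) v, u> = - <v, rho(X) u> *)
Definition rho_dual (n m : nat) (act : 'rV[R]_n -> 'rV[R]_m -> 'rV[R]_m)
  (X : 'rV[R]_n) (v : 'rV[R]_m) : 'rV[R]_m :=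
  \row_(j < m) - dot v (act X (delta_mx 0 j)).

Definition Stab (n m : nat) (act : 'rV[R]_n -> 'rV[R]_m -> 'rV[R]_m)
  (v : 'rV[R]_m) (X : 'rV[R]_n) : Prop := rho_dual act X v = 0.

Definition Stab_perp (n m : nat) (act : 'rV[R]_n -> 'rV[R]_m -> 'rV[R]_m)
  (v : 'rV[R]_m) (L : 'rV[R]_n) : Prop :=
  forall X, Stab act v X -> dot L X = 0.

Definition semidirect_bracket (n m : nat) (br : 'rV[R]_n -> 'rV[R]_n -> 'rV[R]_n)
  (act : 'rV[R]_n -> 'rV[R]_m -> 'rV[R]_m) (a b : 'rV[R]_(n + m)) : 'rV[R]_(n + m) :=
  row_mx (br (lsubmx a) (lsubmx b))
         (act (lsubmx a) (rsubmx b) - act (lsubmx b) (rsubmx a)).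

Definition ev (N : nat) (p : {mpoly R[N]}) (x : 'rV[R]_N) : R := p.@[fun i => x 0 i].

(* differential d p(x), an element of l = l^** = R^N *)
Definition grad (N : nat) (p : {mpoly R[N]}) (x : 'rV[R]_N) : 'rV[R]_N :=
  \row_(i < N) ev (mderiv i p) x.

Definition span_of (N : nat) (s : seq 'rV[R]_N) (a : 'rV[R]_N) : Prop :=
  exists c : 'I_(size s) -> R, a = \sum_(i < size s) c i *: s`_i.

Definition isotropic (N : nat) (B : 'rV[R]_N -> 'rV[R]_N -> R) (W : 'rV[R]_N -> Prop) :=
  forall a b, W a -> W b -> B a b = 0.

Definition max_isotropic (N : nat) (B : 'rV[R]_N -> 'rV[R]_N -> R)
  (U W : 'rV[R]_N -> Prop) : Prop :=
  [/\ (forall a, W a -> U a), isotropic B W &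
      forall W' : 'rV[R]_N -> Prop, (forall a, W a -> W' a) ->
        (forall a, W' a -> U a) -> isotropic B W' -> forall a, W' a -> W a].

Definition complete_commutative_set (N : nat)
  (lbr : 'rV[R]_N -> 'rV[R]_N -> 'rV[R]_N) (S : seq {mpoly R[N]}) : Prop :=
  (forall f g, f \in S -> g \in S -> forall x, dot x (lbr (grad f x) (grad g x)) = 0) /\
  exists q : {mpoly R[N]}, q != 0 /\
    forall x, ev q x != 0 ->
      max_isotropic (fun a b => dot x (lbr a b)) (fun _ => True)
                    (span_of [seq grad f x | f <- S]).

(* For f on g^* = R^(n+m) and fixed v, the function M |-> f(M,v) on k^*;
   this is f_v o pi_v.  Its differential in M. *)
Definition gradM (n m : nat) (f : {mpoly R[n + m]}) (M : 'rV[R]_n) (v : 'rV[R]_m)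
  : 'rV[R]_n := lsubmx (grad f (row_mx M v)).

(* f_{1,v},...,f_{l,v} pairwise commute for the Lie-Poisson bracket on
   St(v)^* and form a complete commutative set in S(St(v)); everything is
   pulled back to k^* along pi_v (genericity in xi = pi_v(M) is expressed by
   a nonzero polynomial in M). *)
Definition complete_commutative_on_stab (n m : nat)
  (br : 'rV[R]_n -> 'rV[R]_n -> 'rV[R]_n) (act : 'rV[R]_n -> 'rV[R]_m -> 'rV[R]_m)
  (fs : seq {mpoly R[n + m]}) (v : 'rV[R]_m) : Prop :=
  (forall f g, f \in fs -> g \in fs -> forall M,
      dot M (br (gradM f M v) (gradM g M v)) = 0) /\
  exists q : {mpoly R[n]}, q != 0 /\
    forall M, ev q M != 0 ->
      max_isotropic (fun a b => dot M (br a b)) (Stab act v)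
                    (span_of [seq gradM f M v | f <- fs]).

End Defs.

(* Let J(x) be the matrix whose rows are the differentials at x in g^* of the
   f_i and of the coordinates of V, and B(x) the matrix of Phi_x. Once these
   functions Poisson-commute, J B J^T = 0, and the rows of J(x) span a maximal
   Phi_x-isotropic subspace iff 2 dim g <= 2 rk J(x) + rk B(x). This inequality
   persists off the zero set of two minors, so one good point suffices: take
   x = (M, v) with v and pi_v(M) generic. Invariance under St(v)^perp puts the
   k-part of every df_i into St(v). If a = (X, u) is Phi_x-orthogonal to J(x),
   orthogonality to the coordinates of V gives X in St(v); orthogonality to the
   df_i then makes X orthogonal in St(v) to the df_{i,v}, so X lies in their
   span, and subtracting a lift of X leaves a vector of V.
   Commutativity, assumed for generic v, extends to all v by density. *)

From HB Require Import structures.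
From mathcomp Require Import all_boot all_order all_algebra.
From mathcomp Require Import mpoly.
From mathcomp Require Import reals.
From mathcomp Require Import ring zify.
From Stdlib Require Import Classical.
Import GRing.Theory Num.Theory.
Local Open Scope ring_scope.
Set Implicit Arguments.
Unset Strict Implicit.
Unset Printing Implicit Defensive.

Section DirectionalDerivative.
Variables (R : numDomainType) (N : nat) (x y : 'I_N -> R).
Implicit Types (f g : {mpoly R[N]}).

Definition mdirderiv f : R := \sum_i y i * (mderiv i f).@[x].

Definition taylor1 f := exists h : {poly R}, forall t : R,
  f.@[fun i => x i + t * y i] = f.@[x] + t * mdirderiv f + t ^+ 2 * h.[t].

Lemma mdirderivD f g : mdirderiv (f + g) = mdirderiv f + mdirderiv g.
Proof.
rewrite /mdirderiv -big_split; apply: eq_bigr => i _.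
by rewrite mderivD mevalD mulrDr.
Qed.

Lemma mdirderivM f g :
  mdirderiv (f * g) = mdirderiv f * g.@[x] + f.@[x] * mdirderiv g.
Proof.
rewrite /mdirderiv mulr_suml mulr_sumr -big_split; apply: eq_bigr => i _.
by rewrite mderivM mevalD !mevalM /=; ring.
Qed.

Lemma mdirderivC c : mdirderiv c%:MP = 0.
Proof. by rewrite /mdirderiv big1 // => i _; rewrite mderivC meval0 mulr0. Qed.

Lemma mderivX_meval (i k : 'I_N) : (mderiv i 'X_k).@[x] = (k == i)%:R.
Proof.
rewrite mderivX mnm1E mevalZ; have [->|_] := eqVneq k i; last by rewrite mul0r.
rewrite (_ : (U_(i) - U_(i))%MM = 0%MM) ?mpolyX0 ?meval1 ?mulr1 //.
by apply/mnmP => j; rewrite mnmBE subnn mnm0E.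
Qed.

Lemma mdirderivX k : mdirderiv 'X_k = y k.
Proof.
rewrite /mdirderiv (bigD1 k) //= big1 ?addr0 => [|i ik]; rewrite mderivX_meval.
  by rewrite eqxx mulr1.
by rewrite eq_sym (negbTE ik) mulr0.
Qed.

Lemma taylor1C c : taylor1 c%:MP.
Proof. by exists 0 => t; rewrite !mevalC mdirderivC horner0; ring. Qed.

Lemma taylor1X k : taylor1 'X_k.
Proof. by exists 0 => t; rewrite !mevalXU mdirderivX horner0; ring. Qed.

Lemma taylor1D f g : taylor1 f -> taylor1 g -> taylor1 (f + g).
Proof.
move=> [h1 H1] [h2 H2]; exists (h1 + h2) => t.
by rewrite !mevalD H1 H2 mdirderivD hornerD; ring.
Qed.

Lemma taylor1M f g : taylor1 f -> taylor1 g -> taylor1 (f * g).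
Proof.
move=> [h1 H1] [h2 H2].
exists ((mdirderiv f * mdirderiv g)%:P + f.@[x] *: h2 + g.@[x] *: h1
        + 'X * (mdirderiv f *: h2 + mdirderiv g *: h1) + 'X ^+ 2 * (h1 * h2)) => t.
rewrite !mevalM H1 H2 mdirderivM.
by rewrite !(hornerD, hornerM, hornerZ, hornerC, hornerX, hornerXn); ring.
Qed.

Lemma taylor1_mpoly f : taylor1 f.
Proof.
rewrite (mpolyE f); elim/big_ind: _ => [||mon _]; [exact: (taylor1C 0) | exact: taylor1D |].
rewrite -mul_mpolyC mpolyXE_id; apply: taylor1M; first exact: taylor1C.
elim/big_ind: _ => [||i _]; [exact: (taylor1C 1) | exact: taylor1M |].
elim: (mon i) => [|k IHk]; first exact: (taylor1C 1).
by rewrite exprS; apply: taylor1M IHk; exact: taylor1X.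
Qed.

(* The remainder [mdirderiv f + t h(t)] vanishes at every [t != 0], hence identically. *)
Lemma mdirderiv_eq0 f :
  (forall t : R, f.@[fun i => x i + t * y i] = f.@[x]) -> mdirderiv f = 0.
Proof.
move=> fconst; have [h Hh] := taylor1_mpoly f.
pose Q : {poly R} := (mdirderiv f)%:P + 'X * h.
have hornerQ t : Q.[t] = mdirderiv f + t * h.[t].
  by rewrite hornerD hornerC hornerM hornerX.
have Q_root t : t != 0 -> Q.[t] = 0.
  move=> t0; have E := Hh t; rewrite fconst in E.
  have : t * Q.[t] = 0.
    by rewrite hornerQ; apply: (addrI f.@[x]); rewrite addr0 {2}E; ring.
  by move/eqP; rewrite mulf_eq0 (negbTE t0) => /eqP.
have Q0 : Q = 0.
  apply: (@roots_geq_poly_eq0 _ _ [seq (i.+1)%:R | i <- iota 0 (size Q)]).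
  - by apply/allP => _ /mapP [i _ ->]; apply/eqP/Q_root; rewrite pnatr_eq0.
  - by rewrite map_inj_uniq ?iota_uniq // => i j /eqP; rewrite eqr_nat => /eqP [].
  - by rewrite size_map size_iota.
by move: (hornerQ 0); rewrite Q0 horner0 mul0r addr0.
Qed.
End DirectionalDerivative.

Section VanishingPolynomial.
Variables (R : numDomainType) (N : nat).
Implicit Types (p : {mpoly R[N]}).

Lemma mpoly_rmorph_eq (S : comNzRingType) (f g : {rmorphism {mpoly R[N]} -> S}) :
  (forall c, f c%:MP = g c%:MP) -> (forall i, f 'X_i = g 'X_i) -> f =1 g.
Proof.
move=> eqC eqX p; rewrite (mpolyE p) !rmorph_sum; apply: eq_bigr => m _.
rewrite -mul_mpolyC !rmorphM eqC mpolyXE_id !rmorph_prod; congr (_ * _).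
by apply: eq_bigr => i _; rewrite !rmorphXn eqX.
Qed.

Lemma meval0_mcoeff p : p.@[fun _ => 0] = p@_0.
Proof.
apply: (@mpoly_rmorph_eq R (meval (fun _ : 'I_N => 0 : R)) (mcoeff 0) _ _ p) => [c|i] /=.
  by rewrite mevalC mcoeffC eqxx mulr1.
by rewrite mevalXU mcoeffX mnm1_eq0.
Qed.

Lemma mderiv_meval_eq0 p : (forall v, p.@[v] = 0) ->
  forall i v, (mderiv i p).@[v] = 0.
Proof.
move=> p0 i v; have := @mdirderiv_eq0 R N v (fun j => (j == i)%:R) p.
rewrite /mdirderiv (bigD1 i) //= big1 ?addr0 ?eqxx ?mul1r => [|j /negbTE ->].
  by apply=> t; rewrite !p0.
by rewrite mul0r.
Qed.

Lemma mcoeff_meval_eq0 p : (forall v, p.@[v] = 0) -> forall m, p@_m = 0.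
Proof.
move=> p0 m; elim: {m}(mdeg m) {-2}m (erefl (mdeg m)) p p0 => [|d IHd] m dm p p0.
  by move/eqP: dm; rewrite mdeg_eq0 => /eqP ->; rewrite -meval0_mcoeff p0.
have [i mi_gt0] : exists i, (0 < m i)%N.
  apply/existsP; apply: contraT; rewrite negb_exists => /forallP m0.
  suff m_eq0 : m = 0%MM by rewrite m_eq0 mdeg0 in dm.
  by apply/mnmP => i; rewrite mnm0E; apply/eqP; rewrite -leqn0 leqNgt m0.
have Em : m = ((m - U_(i)) + U_(i))%MM.
  apply/mnmP => j; rewrite mnmDE mnmBE mnm1E.
  by case: (eqVneq i j) => [<-|_]; [rewrite subnK | rewrite subn0 addn0].
have dm' : mdeg (m - U_(i))%MM = d by move: dm; rewrite {1}Em mdegD mdeg1 addn1 => [[]].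
have := IHd _ dm' _ (mderiv_meval_eq0 p0 i).
by rewrite mcoeff_mderiv -Em => /eqP; rewrite mulrn_eq0 /= => /eqP.
Qed.

Lemma mpoly_meval_eq0 p : (forall v, p.@[v] = 0) -> p = 0.
Proof. by move=> p0; apply/mpolyP => m; rewrite mcoeff0 (mcoeff_meval_eq0 p0). Qed.

End VanishingPolynomial.

Lemma mpoly_eq0_off_zeros (R : numDomainType) (N : nat) (p e : {mpoly R[N]}) :
  p != 0 -> (forall v, p.@[v] != 0 -> e.@[v] = 0) -> e = 0.
Proof.
move=> p0 e0; have : e * p = 0.
  apply: mpoly_meval_eq0 => v; rewrite mevalM.
  by have [->|/e0 ->] := eqVneq p.@[v] 0; rewrite ?mulr0 ?mul0r.
by move/eqP; rewrite mulf_eq0 (negbTE p0) orbF => /eqP.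
Qed.

Lemma exists_ev_neq0 (R : realType) (N : nat) (p : {mpoly R[N]}) :
  p != 0 -> exists x, ev p x != 0.
Proof.
move=> p0; apply: not_all_not_ex => p_eq0; move/eqP: p0; apply.
apply: mpoly_meval_eq0 => w; apply/eqP/contraT => pw0; case: (p_eq0 (\row_i w i)).
by rewrite /ev (meval_eq _ (fun i => mxE _ _ _ _)).
Qed.

Section IsotropicRank.
Variables (F : fieldType) (N s : nat) (W : 'M[F]_(s, N)) (B : 'M[F]_N).
Hypothesis W_iso : W *m B *m W^T = 0.

(* The B-orthogonal of W is the kernel of [B *m W^T]; it contains W, and
   Sylvester's inequality [mxrank_mul_min] bounds its dimension by [\rank W]. *)
Lemma isotropic_rank_max : (2 * N <= 2 * \rank W + \rank B)%N ->
  forall a : 'rV_N, a *m B *m W^T = 0 -> (a <= W)%MS.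
Proof.
move=> rank_big a aBW; set K := B *m W^T.
have sWK : (W <= kermx K)%MS by apply/sub_kermxP; rewrite mulmxA.
have saK : (a <= kermx K)%MS by apply/sub_kermxP; rewrite mulmxA.
have rKB := mxrank_mul_min B W^T; rewrite mxrank_tr -/K in rKB.
have le_KW : (\rank (kermx K) <= \rank W)%N.
  by rewrite mxrank_ker; have := rank_leq_row B; have := rank_leq_col W; lia.
have [_ /esym eqKW] := mxrank_leqif_sup sWK.
have sKW : (kermx K <= W)%MS by rewrite eqKW eqn_leq le_KW mxrankS.
exact: submx_trans saK sKW.
Qed.

Lemma isotropic_max_rank : B^T = - B ->
  (forall a : 'rV_N, a *m B *m W^T = 0 -> (a <= W)%MS) ->
  (2 * N <= 2 * \rank W + \rank B)%N.
Proof.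
move=> B_skew W_max; set K := B *m W^T.
have sWK : (W <= kermx K)%MS by apply/sub_kermxP; rewrite mulmxA.
have sKW : (kermx K <= W)%MS.
  apply/row_subP => i; apply: W_max; rewrite -mulmxA.
  by apply/sub_kermxP; rewrite (submx_trans (row_sub _ _)).
have eqKW : \rank (kermx K) = \rank W by apply/eqP; rewrite eqn_leq !mxrankS.
have rKT : \rank K = \rank (W *m B^T) by rewrite -mxrank_tr trmx_mul trmxK.
have sBW : (kermx B^T <= W)%MS.
  apply: submx_trans sKW; apply/sub_kermxP.
  have := mulmx_ker B^T; rewrite B_skew mulmxN => /eqP; rewrite oppr_eq0 => /eqP kB.
  by rewrite mulmxA kB mul0mx.
have := mxrank_mul_ker W B^T.
have -> : \rank (W :&: kermx B^T)%MS = \rank (kermx B^T).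
  by apply: eqmx_rank; rewrite capmxSr sub_capmx sBW submx_refl.
rewrite mxrank_ker mxrank_tr => rWB.
have := mxrank_ker K; have := rank_leq_row B; have := rank_leq_row K.
lia.
Qed.

End IsotropicRank.

Section RankSemicontinuity.
Variables (F : fieldType) (N : nat).

Definition evmx p q (A : 'M[{mpoly F[N]}]_(p, q)) (x : 'I_N -> F) : 'M[F]_(p, q) :=
  map_mx (meval x) A.

(* The witness is [det (P A Q)] for constant P, Q with [P A(x0) Q = 1], read
   off the Gaussian elimination of [A(x0)]. *)
Lemma evmx_rank_semicontinuous p q (A : 'M[{mpoly F[N]}]_(p, q)) (x0 : 'I_N -> F) :
  exists Q : {mpoly F[N]}, Q.@[x0] != 0 /\
    forall x, Q.@[x] != 0 -> (\rank (evmx A x0) <= \rank (evmx A x))%N.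
Proof.
set A0 := evmx A x0; set r := \rank A0.
pose P : 'M[F]_(r, p) := pid_mx r *m invmx (col_ebase A0).
pose Q : 'M[F]_(q, r) := invmx (row_ebase A0) *m pid_mx r.
pose C u v (M : 'M[F]_(u, v)) := map_mx (fun c => c%:MP : {mpoly F[N]}) M.
have evC u v (M : 'M[F]_(u, v)) x : evmx (C u v M) x = M.
  by apply/matrixP => i j; rewrite !mxE mevalC.
have evminor x : (\det (C _ _ P *m A *m C _ _ Q)).@[x] = \det (P *m evmx A x *m Q).
  by rewrite -det_map_mx /= !map_mxM -!/(evmx _ x) !evC.
have minor0 : P *m A0 *m Q = 1%:M.
  set ce := col_ebase A0; set re := row_ebase A0.
  rewrite -{1}(mulmx_ebase A0) -/ce -/re /P /Q.
  transitivity ((pid_mx r : 'M_(r, p)) *m (invmx ce *m ce) *m (pid_mx r : 'M_(p, q))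
                 *m (re *m invmx re) *m (pid_mx r : 'M_(q, r))); first by rewrite !mulmxA.
  rewrite mulVmx ?col_ebase_unit // mulmxV ?row_ebase_unit // !mulmx1.
  by rewrite pid_mx_id ?rank_leq_row // pid_mx_id ?rank_leq_col // pid_mx_1.
exists (\det (C _ _ P *m A *m C _ _ Q)); split=> [|x]; rewrite evminor.
  by rewrite minor0 det1 oner_neq0.
move=> minor_neq0; have U : P *m evmx A x *m Q \in unitmx by rewrite unitmxE unitfE.
rewrite -(mxrank_unit U); apply: leq_trans (mxrankM_maxl _ _) _.
exact: mxrankM_maxr.
Qed.

End RankSemicontinuity.

Section LinearMap.
Variables (R : nzRingType) (U V : lmodType R) (F : U -> V).
Hypothesis F_lin : linear F.

Let Flin : {linear U -> V} := HB.pack F (GRing.isLinear.Build _ _ _ _ F F_lin).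

Lemma lin0 : F 0 = 0. Proof. exact: (linear0 Flin). Qed.
Lemma linD x y : F (x + y) = F x + F y. Proof. exact: (linearD Flin). Qed.
Lemma linN x : F (- x) = - F x. Proof. exact: (linearN Flin). Qed.
Lemma linZ a x : F (a *: x) = a *: F x. Proof. exact: (linearZ_LR Flin). Qed.

Lemma lin_sumZ (I : Type) (r : seq I) (P : pred I) (c : I -> R) (u : I -> U) :
  F (\sum_(i <- r | P i) c i *: u i) = \sum_(i <- r | P i) c i *: F (u i).
Proof. by elim/big_rec2: _ => [|i y1 y2 _ <-]; rewrite ?lin0 // linD linZ. Qed.

End LinearMap.

Section Dot.
Variables (R : realType) (p : nat).
Implicit Types (a b z : 'rV[R]_p).

Lemma dotC a b : dot a b = dot b a.
Proof. by apply: eq_bigr => i _; rewrite mulrC. Qed.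

Lemma dot_linear z : linear (dot z : 'rV_p -> R^o).
Proof.
move=> c a b; rewrite /dot scaler_sumr -big_split; apply: eq_bigr => i _.
by rewrite !mxE mulrDr; congr (_ + _); exact: mulrCA.
Qed.

Lemma dot0r z : dot z 0 = 0. Proof. exact: lin0 (dot_linear z). Qed.
Lemma dot0l z : dot 0 z = 0. Proof. by rewrite dotC dot0r. Qed.
Lemma dotNr z a : dot z (- a) = - dot z a. Proof. exact: (linN (dot_linear z) a). Qed.
Lemma dotDr z a b : dot z (a + b) = dot z a + dot z b. Proof. exact: (linD (dot_linear z) a b). Qed.
Lemma dotZr z c a : dot z (c *: a) = c * dot z a. Proof. exact: (linZ (dot_linear z) c a). Qed.
Lemma dotBr z a b : dot z (a - b) = dot z a - dot z b. Proof. by rewrite dotDr dotNr. Qed.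

Lemma dot_sumZr z (I : Type) (r : seq I) (P : pred I) (c : I -> R) (u : I -> 'rV_p) :
  dot z (\sum_(i <- r | P i) c i *: u i) = \sum_(i <- r | P i) c i * dot z (u i).
Proof. exact: (lin_sumZ (dot_linear z) r P c u). Qed.

Lemma dot_row_mx q (a c : 'rV[R]_p) (b d : 'rV[R]_q) :
  dot (row_mx a b) (row_mx c d) = dot a c + dot b d.
Proof.
by rewrite /dot big_split_ord; congr (_ + _); apply: eq_bigr => i _;
  rewrite ?row_mxEl ?row_mxEr.
Qed.

End Dot.

Lemma mdirderiv_grad (R : realType) (N : nat) (f : {mpoly R[N]}) (x y : 'rV[R]_N) :
  mdirderiv (fun i => x 0 i) (fun i => y 0 i) f = dot y (grad f x).
Proof. by apply: eq_bigr => i _; rewrite mxE. Qed.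

Lemma gradX (R : realType) (N : nat) (k : 'I_N) (x : 'rV[R]_N) : grad 'X_k x = 'e_k.
Proof. by apply/rowP => i; rewrite !mxE /ev mderivX_meval eq_sym. Qed.

Section Bilinear.
Variables (R : realType) (p q : nat) (G : 'rV[R]_p -> 'rV[R]_p -> 'rV[R]_q).
Hypotheses (G_linl : forall b, linear (G^~ b)) (G_linr : forall a, linear (G a)).

Lemma bilinear_skew : (forall a, G a a = 0) -> forall a b, G b a = - G a b.
Proof.
move=> G_alt a b; have := G_alt (a + b).
rewrite (linD (G_linl _)) !(linD (G_linr _)) !G_alt add0r addr0 => /eqP.
by rewrite addr_eq0 => /eqP ->; rewrite opprK.
Qed.

Lemma dot_bilinear z a b :
  dot z (G a b) = \sum_i \sum_j a 0 i * b 0 j * dot z (G 'e_i 'e_j).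
Proof.
rewrite {1}(row_sum_delta a) (lin_sumZ (G_linl b)) dot_sumZr; apply: eq_bigr => i _.
rewrite {1}(row_sum_delta b) (lin_sumZ (G_linr _)) dot_sumZr mulr_sumr.
by apply: eq_bigr => j _; rewrite mulrA.
Qed.

End Bilinear.

Lemma max_isotropic_orth (R : realType) (N : nat) (B : 'rV[R]_N -> 'rV[R]_N -> R)
    (U W : 'rV[R]_N -> Prop) X :
  max_isotropic B U W -> (forall a, B a a = 0) -> (forall a b, B b a = - B a b) ->
  U X -> (forall w, W w -> B X w = 0) -> W X.
Proof.
move=> [sWU W_iso W_max] B_alt B_skew UX XW.
apply: (W_max (fun y => W y \/ y = X)) => [y Wy|y [/sWU|->]|y z [Wy|->] [Wz|->]|]; auto.
by rewrite B_skew XW ?oppr0.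
Qed.

Section PoissonMatrix.
Variables (R : realType) (N : nat) (lbr : 'rV[R]_N -> 'rV[R]_N -> 'rV[R]_N).
Hypotheses (lbr_linl : forall b, linear (lbr^~ b)) (lbr_linr : forall a, linear (lbr a)).
Hypothesis lbr_alt : forall a, lbr a a = 0.
Implicit Types (x a b : 'rV[R]_N) (S : seq {mpoly R[N]}).

Definition evmx_at p q (A : 'M[{mpoly R[N]}]_(p, q)) x := evmx A (fun i => x 0 i).

Definition jacobian S : 'M[{mpoly R[N]}]_(size S, N) := \matrix_(k, i) mderiv i S`_k.

Definition poisson_mx : 'M[{mpoly R[N]}]_N :=
  \matrix_(i, j) \sum_k (lbr 'e_i 'e_j) 0 k *: 'X_k.

Lemma row_jacobian S x k : row k (evmx_at (jacobian S) x) = grad S`_k x.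
Proof. by apply/rowP => i; rewrite !mxE. Qed.

Lemma grad_sub_jacobian S f x : f \in S -> (grad f x <= evmx_at (jacobian S) x)%MS.
Proof.
move=> Sf; have Sf_lt : (index f S < size S)%N by rewrite index_mem.
by have := row_sub (Ordinal Sf_lt) (evmx_at (jacobian S) x); rewrite row_jacobian nth_index.
Qed.

Lemma span_of_jacobian S x a :
  span_of [seq grad f x | f <- S] a <-> (a <= evmx_at (jacobian S) x)%MS.
Proof.
have size_grads : size [seq grad f x | f <- S] = size S by rewrite size_map.
split=> [[c ->]|/submxP [D ->]].
  apply: summx_sub => k _; apply: scalemx_sub; rewrite (nth_map 0) -?size_grads //.
  by apply: grad_sub_jacobian; rewrite mem_nth // -size_grads.
rewrite mulmx_sum_row.
exists (fun k => if insub (nat_of_ord k) is Some k' then D 0 k' else 0).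
rewrite size_grads; apply: eq_bigr => k _.
by rewrite valK row_jacobian (nth_map 0).
Qed.

Lemma evmx_poisson_mx x i j : evmx_at poisson_mx x i j = dot x (lbr 'e_i 'e_j).
Proof.
rewrite /evmx_at /evmx !mxE raddf_sum; apply: eq_bigr => k _.
by rewrite /= mevalZ mevalXU mulrC.
Qed.

Lemma dot_poisson_mx x a b : dot x (lbr a b) = (a *m evmx_at poisson_mx x *m b^T) 0 0.
Proof.
rewrite (dot_bilinear lbr_linl lbr_linr) mxE.
under [RHS]eq_bigr => j _ do rewrite mxE mulr_suml.
rewrite exchange_big; apply: eq_bigr => i _; apply: eq_bigr => j _.
by rewrite [b^T _ _]mxE evmx_poisson_mx mulrAC.
Qed.

Lemma poisson_mx_skew x : (evmx_at poisson_mx x)^T = - evmx_at poisson_mx x.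
Proof.
apply/matrixP => i j; rewrite [LHS]mxE [RHS]mxE !evmx_poisson_mx.
by rewrite (bilinear_skew lbr_linl lbr_linr lbr_alt) dotNr.
Qed.

Lemma poisson_jacobian_orth S x a :
  a *m evmx_at poisson_mx x *m (evmx_at (jacobian S) x)^T = 0 <->
  (forall f, f \in S -> dot x (lbr a (grad f x)) = 0).
Proof.
have entry k : (a *m evmx_at poisson_mx x *m (evmx_at (jacobian S) x)^T) 0 k
               = dot x (lbr a (grad S`_k x)).
  rewrite dot_poisson_mx -row_jacobian tr_row !mxE.
  by apply: eq_bigr => j _; rewrite !mxE.
split=> [orth f Sf | orth].
  have Sf_lt : (index f S < size S)%N by rewrite index_mem.
  by have := entry (Ordinal Sf_lt); rewrite orth nth_index // mxE.
by apply/rowP => k; rewrite entry orth ?mem_nth // mxE.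
Qed.

Lemma jacobian_isotropic S x :
  (forall f g, f \in S -> g \in S -> dot x (lbr (grad f x) (grad g x)) = 0) ->
  evmx_at (jacobian S) x *m evmx_at poisson_mx x *m (evmx_at (jacobian S) x)^T = 0.
Proof.
move=> S_comm; apply/row_matrixP => k; rewrite row0 !row_mul row_jacobian.
by apply/poisson_jacobian_orth => g Sg; apply: S_comm; rewrite ?mem_nth.
Qed.

Lemma complete_commutative_set_of_point S :
  (forall f g, f \in S -> g \in S -> forall x, dot x (lbr (grad f x) (grad g x)) = 0) ->
  (exists x0, forall a, (forall f, f \in S -> dot x0 (lbr a (grad f x0)) = 0) ->
      (a <= evmx_at (jacobian S) x0)%MS) ->
  complete_commutative_set lbr S.
Proof.
move=> S_comm [x0 x0_max]; split=> //.
have J_iso x := jacobian_isotropic (fun f g Sf Sg => S_comm f g Sf Sg x).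
have rank0 := isotropic_max_rank (J_iso x0) (poisson_mx_skew x0)
  (fun a orth => x0_max a (proj1 (poisson_jacobian_orth S x0 a) orth)).
have [qJ [qJ0 rankJ]] := evmx_rank_semicontinuous (jacobian S) (fun i => x0 0 i).
have [qB [qB0 rankB]] := evmx_rank_semicontinuous poisson_mx (fun i => x0 0 i).
exists (qJ * qB); split.
  by apply: contraNneq (mulf_neq0 qJ0 qB0) => q0; rewrite -mevalM q0 meval0.
move=> x; rewrite /ev mevalM mulf_eq0 negb_or => /andP [/rankJ rJ /rankB rB].
have rank_x := isotropic_rank_max (J_iso x)
  (leq_trans rank0 (leq_add (leq_mul (leqnn 2) rJ) rB)).
split=> // [a b /span_of_jacobian/submxP [Da ->] /span_of_jacobian/submxP [Db ->]|].
  rewrite dot_poisson_mx trmx_mul !mulmxA -(mulmxA Da) -(mulmxA Da (_ *m _)).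
  by rewrite J_iso mulmx0 mul0mx mxE.
move=> W' sW' _ W'_iso a W'a; apply/span_of_jacobian/rank_x.
apply/poisson_jacobian_orth => f Sf; apply: W'_iso => //; apply: sW'.
by apply/span_of_jacobian/grad_sub_jacobian.
Qed.

End PoissonMatrix.

Section SemidirectSum.
Variables (R : realType) (n m : nat).
Variables (br : 'rV[R]_n -> 'rV[R]_n -> 'rV[R]_n) (act : 'rV[R]_n -> 'rV[R]_m -> 'rV[R]_m).
Hypotheses (Hlie : is_lie_algebra br) (Hrep : is_representation br act).
Implicit Types (M X Y : 'rV[R]_n) (v u w : 'rV[R]_m).

Local Notation sb := (semidirect_bracket br act).

Lemma br_linl Y : linear (br^~ Y). Proof. by case: Hlie => H _ _ _ a X Z; rewrite H. Qed.
Lemma br_linr X : linear (br X). Proof. by case: Hlie => _ H _ _ a Y Z; rewrite H. Qed.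
Lemma br_alt X : br X X = 0. Proof. by case: Hlie. Qed.
Lemma act_linl u : linear (act^~ u). Proof. by case: Hrep => H _ _ a X Y; rewrite H. Qed.
Lemma act_linr X : linear (act X). Proof. by case: Hrep => _ H _ a u w; rewrite H. Qed.

Lemma semidirect_bracket_row_mx X Y u w :
  sb (row_mx X u) (row_mx Y w) = row_mx (br X Y) (act X w - act Y u).
Proof. by rewrite /semidirect_bracket !row_mxKl !row_mxKr. Qed.

Lemma semidirect_bracket_linl b : linear (sb^~ b).
Proof.
move=> c x y; rewrite -[x]hsubmxK -[y]hsubmxK -[b]hsubmxK scale_row_mx add_row_mx.
rewrite !semidirect_bracket_row_mx scale_row_mx add_row_mx (br_linl _ c) (act_linl _ c).
by rewrite (act_linr _ c) scalerBr opprD addrACA.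
Qed.

Lemma semidirect_bracket_linr a : linear (sb a).
Proof.
move=> c x y; rewrite -[x]hsubmxK -[y]hsubmxK -[a]hsubmxK scale_row_mx add_row_mx.
rewrite !semidirect_bracket_row_mx scale_row_mx add_row_mx (br_linr _ c) (act_linr _ c).
by rewrite (act_linl _ c) scalerBr opprD addrACA.
Qed.

Lemma semidirect_bracket_alt a : sb a a = 0.
Proof. by rewrite -[a]hsubmxK semidirect_bracket_row_mx br_alt subrr row_mx0. Qed.

Lemma dot_semidirect_bracket M v X Y u w :
  dot (row_mx M v) (sb (row_mx X u) (row_mx Y w)) =
  dot M (br X Y) + (dot v (act X w) - dot v (act Y u)).
Proof. by rewrite semidirect_bracket_row_mx dot_row_mx dotBr. Qed.

Lemma dot_act_rho_dual v X u : dot v (act X u) = - dot (rho_dual act X v) u.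
Proof.
rewrite {1}(row_sum_delta u) (lin_sumZ (act_linr X)) dot_sumZr /dot -sumrN.
by apply: eq_bigr => j _; rewrite mxE mulNr opprK mulrC.
Qed.

Lemma Stab_dot_act v X u : Stab act v X -> dot v (act X u) = 0.
Proof. by rewrite dot_act_rho_dual => ->; rewrite dot0l oppr0. Qed.

Lemma StabP v X : (forall j, dot v (act X 'e_j) = 0) -> Stab act v X.
Proof. by move=> vX0; apply/rowP => j; rewrite !mxE vX0 oppr0. Qed.

Lemma Stab0 v : Stab act v 0.
Proof. by apply: StabP => j; rewrite (lin0 (act_linl _)) dot0r. Qed.

Lemma dot_semidirect_bracket_Stab M v X Y u w : Stab act v X -> Stab act v Y ->
  dot (row_mx M v) (sb (row_mx X u) (row_mx Y w)) = dot M (br X Y).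
Proof.
by move=> vX vY; rewrite dot_semidirect_bracket !Stab_dot_act // subrr addr0.
Qed.

Lemma dot_semidirect_bracket_rshift M v a j :
  dot (row_mx M v) (sb a (grad 'X_(rshift n j) (row_mx M v))) = dot v (act (lsubmx a) 'e_j).
Proof.
rewrite gradX delta_mx_rshift -[a]hsubmxK dot_semidirect_bracket row_mxKl.
by rewrite (lin0 (br_linr _)) (lin0 (act_linl _)) dot0r dot0r subr0 add0r.
Qed.

(* [L := <v, rho(.) e_j>] lies in [St(v)^perp], so f is constant along
   [M + t L] and its derivative [<v, rho(d_M f) e_j>] vanishes. *)
Lemma gradM_Stab (f : {mpoly R[n + m]}) :
  (forall M L v, Stab_perp act v L -> ev f (row_mx M v) = ev f (row_mx (M + L) v)) ->
  forall M v, Stab act v (gradM f M v).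
Proof.
move=> f_inv M v; apply: StabP => j.
pose L : 'rV[R]_n := \row_i dot v (act 'e_i 'e_j).
have dotL X : dot X L = dot v (act X 'e_j).
  rewrite {2}(row_sum_delta X) (lin_sumZ (act_linl _)) dot_sumZr.
  by apply: eq_bigr => i _; rewrite mxE.
have tL_perp t : Stab_perp act v (t *: L).
  by move=> X vX; rewrite dotC dotZr dotL Stab_dot_act // mulr0.
rewrite -dotL -{1}[gradM f M v]/(lsubmx (grad f (row_mx M v))).
have -> : dot (lsubmx (grad f (row_mx M v))) L = dot (row_mx L 0) (grad f (row_mx M v)).
  by rewrite -{2}[grad f _]hsubmxK dot_row_mx dot0l addr0 dotC.
rewrite -mdirderiv_grad; apply: mdirderiv_eq0 => t.
rewrite [RHS](f_inv M (t *: L) v (tL_perp t)); apply: meval_eq => i.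
have -> : row_mx (M + t *: L) v = row_mx M v + t *: row_mx L 0.
  by rewrite scale_row_mx add_row_mx scaler0 addr0.
by rewrite !mxE.
Qed.

Definition subst_left M : (n + m).-tuple {mpoly R[m]} :=
  [tuple match split k with inl i => (M 0 i)%:MP | inr j => 'X_j end | k < n + m].

Lemma ev_subst_left (h : {mpoly R[n + m]}) M w :
  (h \mPo subst_left M).@[fun j => w 0 j] = ev h (row_mx M w).
Proof.
rewrite comp_mpoly_meval; apply: meval_eq => k; rewrite tnth_mktuple.
by case: split_ordP => [i|j] ->; rewrite ?mevalC ?mevalXU ?row_mxEl ?row_mxEr.
Qed.

Lemma gradM_commute (f g : {mpoly R[n + m]}) (p : {mpoly R[m]}) : p != 0 ->
  (forall v, ev p v != 0 -> forall M, dot M (br (gradM f M v) (gradM g M v)) = 0) ->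
  forall M v, dot M (br (gradM f M v) (gradM g M v)) = 0.
Proof.
move=> p0 fg_comm M v.
pose E := \sum_i \sum_j ((mderiv (lshift m i) f \mPo subst_left M)
            * (mderiv (lshift m j) g \mPo subst_left M) * (dot M (br 'e_i 'e_j))%:MP).
have evE w : E.@[fun j => w 0 j] = dot M (br (gradM f M w) (gradM g M w)).
  rewrite (dot_bilinear br_linl br_linr) rmorph_sum; apply: eq_bigr => i _.
  rewrite rmorph_sum; apply: eq_bigr => j _.
  by rewrite !rmorphM /= mevalC !ev_subst_left !mxE.
suff E0 : E = 0 by rewrite -evE E0 meval0.
apply: (mpoly_eq0_off_zeros p0) => w pw.
have row_w : w =1 fun j => (\row_j w j) 0 j by move=> j; rewrite mxE.
by rewrite (meval_eq _ row_w) evE fg_comm // /ev -(meval_eq _ row_w).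
Qed.

Variable fs : seq {mpoly R[n + m]}.
Hypothesis fs_inv : forall f, f \in fs -> forall M L v,
  Stab_perp act v L -> ev f (row_mx M v) = ev f (row_mx (M + L) v).
Hypothesis fs_gen : exists p : {mpoly R[m]}, p != 0 /\
  forall v, ev p v != 0 -> complete_commutative_on_stab br act fs v.

Definition vcoords : seq {mpoly R[n + m]} := [seq 'X_(rshift n j) | j <- enum 'I_m].

Local Notation S := (fs ++ vcoords).

Lemma vcoord_in j : 'X_(rshift n j) \in S.
Proof. by rewrite mem_cat; apply/orP; right; apply: map_f; rewrite mem_enum. Qed.

Lemma gradM_in_Stab f M v : f \in S ->
  Stab act v (gradM f M v) /\ (f \notin fs -> gradM f M v = 0).
Proof.
rewrite mem_cat => /orP [fs_f|/mapP [j _ ->]].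
  by split; [exact: gradM_Stab (fs_inv fs_f) M v | rewrite fs_f].
by rewrite /gradM gradX delta_mx_rshift row_mxKl; split => //; exact: Stab0.
Qed.

Lemma semidirect_commute f g x : f \in S -> g \in S ->
  dot x (sb (grad f x) (grad g x)) = 0.
Proof.
move=> Sf Sg; rewrite -[x]hsubmxK; set M := lsubmx x; set v := rsubmx x.
have [vf fs_f] := gradM_in_Stab M v Sf; have [vg fs_g] := gradM_in_Stab M v Sg.
rewrite -[grad f _]hsubmxK -[grad g _]hsubmxK -/(gradM f M v) -/(gradM g M v).
rewrite dot_semidirect_bracket_Stab //.
have [ff|/fs_f ->] := boolP (f \in fs); last by rewrite (lin0 (br_linl _)) dot0r.
have [fg|/fs_g ->] := boolP (g \in fs); last by rewrite (lin0 (br_linr _)) dot0r.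
have [p [p0 p_gen]] := fs_gen.
by apply: (gradM_commute p0) => w pw; apply: (proj1 (p_gen w pw)).
Qed.

Local Notation J x := (evmx_at (jacobian S) x).

Lemma vertical_sub_jacobian x u : (row_mx 0 u <= J x)%MS.
Proof.
rewrite (row_sum_delta (row_mx 0 u)); apply: summx_sub => k _.
case: (split_ordP k) => [i ->|j ->]; first by rewrite row_mxEl mxE scale0r sub0mx.
by rewrite -(gradX _ x) scalemx_sub ?grad_sub_jacobian ?vcoord_in.
Qed.

Lemma span_gradM_lift M v X : span_of [seq gradM f M v | f <- fs] X ->
  exists2 z, (z <= J (row_mx M v))%MS & lsubmx z = X.
Proof.
have size_grads : size [seq gradM f M v | f <- fs] = size fs by rewrite size_map.
move=> [c ->]; exists (\sum_k c k *: grad fs`_k (row_mx M v)).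
  apply: summx_sub => k _; apply/scalemx_sub/grad_sub_jacobian.
  by rewrite mem_cat mem_nth // -size_grads.
rewrite linear_sum; apply: eq_bigr => k _.
by rewrite linearZ (nth_map 0) // -size_grads.
Qed.

Lemma semidirect_max_point : exists x0, forall a,
  (forall f, f \in S -> dot x0 (sb a (grad f x0)) = 0) -> (a <= J x0)%MS.
Proof.
have [p [p0 p_gen]] := fs_gen; have [v0 pv0] := exists_ev_neq0 p0.
have [_ [q [q0 q_gen]]] := p_gen v0 pv0; have [M0 qM0] := exists_ev_neq0 q0.
exists (row_mx M0 v0) => a a_orth; set X := lsubmx a.
have v0X : Stab act v0 X.
  by apply: StabP => j; rewrite -(dot_semidirect_bracket_rshift M0) a_orth ?vcoord_in.
have X_orth f : f \in fs -> dot M0 (br X (gradM f M0 v0)) = 0.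
  move=> fs_f; have Sf : f \in S by rewrite mem_cat fs_f.
  have [v0f _] := gradM_in_Stab M0 v0 Sf.
  rewrite -(dot_semidirect_bracket_Stab M0 (rsubmx a) (rsubmx (grad f (row_mx M0 v0))) v0X v0f).
  by rewrite hsubmxK -/(lsubmx (grad f _)) hsubmxK a_orth.
have [z z_sub zX] : exists2 z, (z <= J (row_mx M0 v0))%MS & lsubmx z = X.
  apply/span_gradM_lift/(max_isotropic_orth (q_gen M0 qM0)) => // [b|b c|w].
  - by rewrite br_alt dot0r.
  - by rewrite (bilinear_skew br_linl br_linr br_alt) dotNr.
  move=> [c ->]; rewrite (lin_sumZ (br_linr X)) dot_sumZr big1 // => k _.
  by rewrite (nth_map 0) ?X_orth ?mulr0 ?mem_nth // -(size_map (fun f => gradM f M0 v0)).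
rewrite -(subrK z a) addmx_sub // -[a - z]hsubmxK linearB /= zX subrr.
exact: vertical_sub_jacobian.
Qed.

End SemidirectSum.

Theorem lemma13 (R : realType) (n m : nat)
  (br : 'rV[R]_n -> 'rV[R]_n -> 'rV[R]_n)
  (act : 'rV[R]_n -> 'rV[R]_m -> 'rV[R]_m)
  (Hlie : is_lie_algebra br)
  (Hrep : is_representation br act)
  (fs : seq {mpoly R[n + m]})
  (Hinv : forall f, f \in fs -> forall (M L : 'rV[R]_n) (v : 'rV[R]_m),
      Stab_perp act v L -> ev f (row_mx M v) = ev f (row_mx (M + L) v))
  (Hgen : exists p : {mpoly R[m]}, p != 0 /\
      forall v : 'rV[R]_m, ev p v != 0 -> complete_commutative_on_stab br act fs v) :
  complete_commutative_set (semidirect_bracket br act)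
    (fs ++ [seq 'X_(rshift n j) | j <- enum 'I_m]).
Proof.
apply: (complete_commutative_set_of_point (semidirect_bracket_linl Hlie Hrep) (semidirect_bracket_linr Hlie Hrep)
          (semidirect_bracket_alt act Hlie)).
  by move=> f g Sf Sg x; exact: (semidirect_commute Hlie Hrep Hinv Hgen).
exact: (semidirect_max_point Hlie Hrep Hinv Hgen).
Qed.
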